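(* For every complex number $q$ with $0<|q|<1$, \[ \sum_{k=1}^{\infty}(-1)^kq^{k^2}[4k+1]\frac{(q;q^2)_k^3}{(q^2;q^2)_k^3}\sum_{i=1}^{2k}(-1)^i\frac{q^i}{[i]^2} =\frac{(q,q^3;q^2)_{\infty}}{(q^2;q^2)_{\infty}^2}\sum_{j=1}^{\infty}\frac{q^{2j}}{[2j]^2}. \]
   Context: For complex $x,q$ with $|q|<1$: $(x;q)_\infty=\prod_{i\ge 0}(1-xq^i)$ and, for an integer $n\ge 0$, $(x;q)_n=\prod_{i=0}^{n-1}(1-xq^i)$ (equivalently $(x;q)_\infty/(xq^n;q)_\infty$). Multiple arguments mean products: $(x_1,\dots,x_r;q)_m=(x_1;q)_m\cdots(x_r;q)_m$ for $m$ a nonnegative integer or $\infty$. The $q$-integer is $[n]=1+q+\cdots+q^{n-1}=(1-q^n)/(1-q)$. *)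

From Stdlib Require Import Reals.
From Coquelicot Require Import Coquelicot.
Open Scope C_scope.

Fixpoint qpoch (x q : C) (n : nat) : C :=
  match n with
  | O => 1
  | S m => qpoch x q m * (1 - x * q ^ m)
  end.

Definition is_qpoch_inf (x q l : C) : Prop :=
  filterlim (fun n => qpoch x q n) eventually (locally l).

Definition qint (q : C) (n : nat) : C := (1 - q ^ n) / (1 - q).

Definition inner_sum (q : C) (k : nat) : C :=
  @sum_n C_AbelianMonoid (fun i => match i with O => RtoC 0 | S _ => (-1) ^ i * q ^ i / (qint q i ^ 2) end) (2 * k).

Definition lhs_term (q : C) (k : nat) : C :=
  match k with O => RtoC 0 | S _ =>
  (-1) ^ k * q ^ (k * k) * qint q (4 * k + 1)
    * (qpoch q (q ^ 2) k ^ 3 / qpoch (q ^ 2) (q ^ 2) k ^ 3)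
    * inner_sum q k end.

Definition rhs_term (q : C) (j : nat) : C :=
  match j with O => RtoC 0 | S _ => q ^ (2 * j) / (qint q (2 * j) ^ 2) end.

(* The identity is the limit n -> oo of the terminating identity

     sum_{k<=n} [4k+1] (q;q^2)_k^3/(q^2;q^2)_k^3 q^k prod_{j<k} (q^(2n) - q^(2j)) / (q^(2n+3);q^2)_k * H_k
       = (q,q^3;q^2)_n / (q^2;q^2)_n^2 * G_n,

   where H_k is the inner sum of the left-hand side, G_n = sum_{j<=n} q^(2j)/[2j]^2, and
   q^k prod_{j<k} (q^(2n) - q^(2j)) tends to (-1)^k q^(k^2).  Let F(n,k) be the k-th summand without H_k,
   divided by the product on the right.  Then (F, R) is a WZ pair: for an explicit rational certificate R,
     F(n+1,k) (H_k - G_(n+1)) - F(n,k) (H_k - G_n) = R(n,k+1) - R(n,k),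
   and since the identity persists when H_k is shifted by a constant, summing over k shows that
   sum_k F(n,k) = 1 and sum_k F(n,k) (H_k - G_n) = 0 for every n.  Letting n -> oo, Tannery's theorem
   applies because the summands are dominated by c B^k |q|^(k^2) uniformly in n. *)

From Stdlib Require Import Reals Lra Lia.
From Coquelicot Require Import Coquelicot.
Open Scope C_scope.

Lemma one_sub_neq0 (x : C) : (Cmod x < 1)%R -> 1 - x <> 0.
Proof.
  intros hx E. replace x with (RtoC 1) in hx by (rewrite <- (Cplus_0_l x), <- E; ring).
  rewrite Cmod_1 in hx. lra.
Qed.

Lemma Cmod_pow_lt_1 (q : C) m : (Cmod q < 1)%R -> (0 < m)%nat -> (Cmod (q ^ m) < 1)%R.
Proof. intros hq hm. rewrite Cmod_pow. apply pow_lt_1_compat; [split; [apply Cmod_ge_0|]|]; auto. Qed.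

Lemma one_sub_pow_neq0 (q : C) m : (Cmod q < 1)%R -> (0 < m)%nat -> 1 - q ^ m <> 0.
Proof. intros hq hm. apply one_sub_neq0, Cmod_pow_lt_1; auto. Qed.

Lemma Cdiv_neq0 (x y : C) : x <> 0 -> y <> 0 -> x / y <> 0.
Proof. intros hx hy E. apply hx. replace x with (x / y * y) by (field; exact hy). rewrite E. ring. Qed.

Lemma qpoch_S (x b : C) n : qpoch x b (S n) = qpoch x b n * (1 - x * b ^ n).
Proof. reflexivity. Qed.

Lemma pow2S (q : C) k : q ^ (2 * S k) = q ^ 2 * q ^ (2 * k).
Proof. rewrite <- Cpow_add_r. f_equal. lia. Qed.

Lemma pow_le_1 (x : R) n : (0 <= x <= 1)%R -> (x ^ n <= 1)%R.
Proof. intros hx. rewrite <- (pow1 n). apply pow_incr. exact hx. Qed.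

Lemma exp_le_compat (x y : R) : (x <= y)%R -> (exp x <= exp y)%R.
Proof. intros [h|h]; [left; now apply exp_increasing|subst; lra]. Qed.

Lemma exp_neg_le_one_sub (z : R) : (0 <= z < 1)%R -> (exp (- (z / (1 - z))) <= 1 - z)%R.
Proof.
  intros hz. rewrite exp_Ropp.
  assert (h : (/ (1 - z) <= exp (z / (1 - z)))%R).
  { replace (/ (1 - z))%R with (1 + z / (1 - z))%R by (field; lra). apply exp_ineq1_le. }
  set (w := exp (z / (1 - z))) in *. rewrite <- (Rinv_inv (1 - z)).
  apply Rinv_le_contravar; [apply Rinv_0_lt_compat; lra|exact h].
Qed.

(** * Limits of complex sequences *)

Lemma filterlim_Cmod (u : nat -> C) (l : C) :
  filterlim u eventually (locally l) <->
  forall eps : R, (0 < eps)%R -> exists N, forall n, (N <= n)%nat -> (Cmod (u n - l) < eps)%R.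
Proof.
  rewrite filterlim_locally_ball_norm. split.
  - intros H eps heps. exact (H (mkposreal eps heps)).
  - intros H eps. exact (H eps (cond_pos eps)).
Qed.

Lemma lim_Cplus (u v : nat -> C) (a b : C) :
  filterlim u eventually (locally a) -> filterlim v eventually (locally b) ->
  filterlim (fun n => u n + v n) eventually (locally (a + b)).
Proof. intros Hu Hv. exact (filterlim_comp_2 _ _ _ Hu Hv (filterlim_plus (V := C_NormedModule) a b)). Qed.

(* [filterlim_mult] is stated for the absolute-value uniform structure of [C_AbsRing], which
   [locally_C] identifies with the one of [C]. *)
Lemma lim_Cmult (u v : nat -> C) (a b : C) :
  filterlim u eventually (locally a) -> filterlim v eventually (locally b) ->
  filterlim (fun n => u n * v n) eventually (locally (a * b)).
Proof.
  intros Hu Hv. apply (filterlim_comp_2 _ _ _ Hu Hv).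
  eapply filterlim_filter_le_2; [intros P; apply locally_C|].
  eapply filterlim_filter_le_1; [|exact (filterlim_mult (K := C_AbsRing) a b)].
  intros P [Q R HQ HR HP]. exists Q R; [apply locally_C, HQ|apply locally_C, HR|exact HP].
Qed.

Lemma lim_Cminus (u v : nat -> C) (a b : C) :
  filterlim u eventually (locally a) -> filterlim v eventually (locally b) ->
  filterlim (fun n => u n - v n) eventually (locally (a - b)).
Proof.
  intros Hu Hv. apply lim_Cplus; [exact Hu|].
  exact (filterlim_comp _ _ _ _ _ _ _ _ Hv (filterlim_opp (V := C_NormedModule) b)).
Qed.

Lemma lim_Cinv (u : nat -> C) (a : C) :
  filterlim u eventually (locally a) -> a <> 0 ->
  filterlim (fun n => / u n) eventually (locally (/ a)).
Proof.
  intros Hu ha. assert (hm : (0 < Cmod a)%R).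
  { destruct (Cmod_ge_0 a) as [h|h]; [exact h|]. now apply eq_sym, Cmod_eq_0 in h. }
  rewrite filterlim_Cmod in *. intros e he.
  destruct (Hu (Cmod a / 2)%R) as [N1 H1]; [lra|].
  destruct (Hu (e * Cmod a * Cmod a / 2)%R) as [N2 H2].
  { apply Rdiv_lt_0_compat; [|lra]. repeat apply Rmult_lt_0_compat; lra. }
  exists (N1 + N2)%nat. intros n hn.
  specialize (H1 n ltac:(lia)). specialize (H2 n ltac:(lia)).
  assert (hun : (Cmod a / 2 <= Cmod (u n))%R).
  { pose proof (Cmod_triangle (u n) (a - u n)) as T. replace (u n + (a - u n)) with a in T by ring.
    rewrite <- (Cmod_opp (a - u n)) in T. replace (- (a - u n)) with (u n - a) in T by ring. lra. }
  assert (u n <> 0) by (intros E; rewrite E, Cmod_0 in hun; lra).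
  replace (/ u n - / a) with (- (u n - a) / (u n * a)) by (field; auto).
  rewrite Cmod_div, Cmod_opp, Cmod_mult by (apply Cmult_neq_0; auto).
  apply Rlt_div_l; [apply Rmult_lt_0_compat; lra|].
  apply Rlt_le_trans with (1 := H2).
  replace (e * Cmod a * Cmod a / 2)%R with (e * (Cmod a / 2 * Cmod a))%R by field.
  apply Rmult_le_compat_l; [lra|]. apply Rmult_le_compat_r; lra.
Qed.

Lemma lim_Cpow_0 (x : C) : (Cmod x < 1)%R -> filterlim (fun n => x ^ n) eventually (locally (RtoC 0)).
Proof.
  intros hx. apply filterlim_Cmod. intros e he.
  destruct (pow_lt_1_zero (Cmod x) ltac:(rewrite Rabs_pos_eq; auto using Cmod_ge_0) e he) as [N HN].
  exists N. intros n hn. replace (x ^ n - 0) with (x ^ n) by ring. rewrite Cmod_pow.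
  specialize (HN n hn). rewrite Rabs_pos_eq in HN; auto using pow_le, Cmod_ge_0.
Qed.

Lemma lim_qpow_2n (q c : C) : (Cmod q < 1)%R ->
  filterlim (fun n => c * q ^ (2 * n)) eventually (locally (RtoC 0)).
Proof.
  intros hq. apply (filterlim_ext (fun n => c * (q ^ 2) ^ n)); [intros n; now rewrite <- Cpow_mult_r|].
  replace (RtoC 0) with (c * 0) by ring.
  apply lim_Cmult; [apply filterlim_const|apply lim_Cpow_0, Cmod_pow_lt_1; auto].
Qed.

Lemma lim_sum_n (u : nat -> nat -> C) (v : nat -> C) (K : nat) :
  (forall k, filterlim (fun n => u n k) eventually (locally (v k))) ->
  filterlim (fun n => sum_n (u n) K) eventually (locally (sum_n v K)).
Proof.
  intros H. induction K as [|K IH].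
  - rewrite sum_O. exact (filterlim_ext _ _ (fun n => eq_sym (sum_O (u n))) (H O)).
  - rewrite sum_Sn. apply (filterlim_ext (fun n => sum_n (u n) K + u n (S K))).
    { intros n. now rewrite sum_Sn. }
    exact (lim_Cplus _ _ _ _ IH (H (S K))).
Qed.

Lemma lim_neq0 (u : nat -> C) (l : C) (m : R) :
  filterlim u eventually (locally l) -> (0 < m)%R -> (forall n, m <= Cmod (u n))%R -> l <> 0.
Proof.
  intros Hu hm hb ->. destruct (proj1 (filterlim_Cmod u 0) Hu m hm) as [N HN].
  specialize (HN N (le_n N)). specialize (hb N). replace (u N - 0) with (u N) in HN by ring. lra.
Qed.

Lemma Cmod_lim_le (u : nat -> C) (l : C) (B : R) :
  filterlim u eventually (locally l) -> (forall n, Cmod (u n) <= B)%R -> (Cmod l <= B)%R.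
Proof.
  intros Hu hb. apply Rle_plus_epsilon. intros e he.
  destruct (proj1 (filterlim_Cmod u l) Hu e he) as [N HN]. specialize (HN N (le_n N)).
  pose proof (Cmod_triangle (u N) (- (u N - l))) as T. rewrite Cmod_opp in T.
  replace (u N + - (u N - l)) with l in T by ring. specialize (hb N). lra.
Qed.

Lemma sum_n_telescope (f g W : nat -> C) m :
  (forall k, g k = f k + (W (S k) - W k)) -> @eq C (sum_n g m) (sum_n f m + W (S m) - W O).
Proof.
  intros hg. induction m as [|m IH].
  - rewrite !sum_O, hg. ring.
  - rewrite !sum_Sn, IH, hg. change plus with Cplus. ring.
Qed.

Lemma sum_n_lin (a b : C) (f g : nat -> C) m :
  @eq C (sum_n (fun k => a * f k + b * g k) m) (a * sum_n f m + b * sum_n g m).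
Proof.
  induction m as [|m IH]; [now rewrite !sum_O|].
  rewrite !sum_Sn, IH. change plus with Cplus. ring.
Qed.

Lemma Cmod_sum_n_le (f : nat -> C) (B : R) m :
  (forall i, Cmod (f i) <= B)%R -> (Cmod (sum_n f m) <= INR (S m) * B)%R.
Proof.
  intros hf. induction m as [|m IH]; [rewrite sum_O; simpl; specialize (hf O); lra|].
  rewrite sum_Sn, S_INR. change plus with Cplus. eapply Rle_trans; [apply Cmod_triangle|].
  specialize (hf (S m)). lra.
Qed.

Lemma Cmod_sum_n_m_le (f : nat -> C) (M : nat -> R) (m n : nat) :
  (forall k, Cmod (f k) <= M k)%R -> (Cmod (sum_n_m f m n) <= sum_n_m M m n)%R.
Proof.
  intros hf. eapply Rle_trans; [apply (norm_sum_n_m (V := C_NormedModule))|].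
  apply sum_n_m_le. exact hf.
Qed.

Lemma tannery (u : nat -> nat -> C) (v : nat -> C) (M : nat -> R) :
  (forall k, filterlim (fun n => u n k) eventually (locally (v k))) ->
  (forall n k, Cmod (u n k) <= M k)%R -> ex_series M ->
  exists L : C, is_series v L /\ filterlim (fun n => sum_n (u n) n) eventually (locally L).
Proof.
  intros hlim hM HM.
  assert (hv : forall k, (Cmod (v k) <= M k)%R).
  { intros k. exact (Cmod_lim_le _ _ _ (hlim k) (fun n => hM n k)). }
  destruct (ex_series_le (V := C_CompleteNormedModule) v M hv HM) as [L HL].
  exists L. split; [exact HL|]. apply filterlim_Cmod. intros e he.
  destruct (Cauchy_ex_series M HM (mkposreal (e / 4) ltac:(lra))) as [K HK]; simpl in HK.
  destruct (proj1 (filterlim_Cmod _ _) (lim_sum_n u v K hlim) (e / 4)%R ltac:(lra)) as [N1 H1].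
  destruct (proj1 (filterlim_Cmod _ _) HL (e / 4)%R ltac:(lra)) as [N2 H2].
  exists (S K + N1 + N2)%nat. intros n hn.
  specialize (H1 n ltac:(lia)). specialize (H2 n ltac:(lia)).
  assert (hMK : (sum_n_m M (S K) n < e / 4)%R).
  { eapply Rle_lt_trans; [apply Rle_abs|]. apply HK; lia. }
  assert (split_sum : forall w : nat -> C, sum_n w n = sum_n w K + sum_n_m w (S K) n).
  { intros w. apply (sum_n_m_Chasles w); lia. }
  rewrite split_sum in H2 |- *.
  set (d := sum_n (u n) K - sum_n v K) in H1.
  set (tu := sum_n_m (u n) (S K) n). set (tv := sum_n_m v (S K) n).
  assert (Tu : (Cmod tu <= sum_n_m M (S K) n)%R) by exact (Cmod_sum_n_m_le _ M _ _ (hM n)).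
  assert (Tv : (Cmod tv <= sum_n_m M (S K) n)%R) by exact (Cmod_sum_n_m_le _ M _ _ hv).
  assert (Tl : (Cmod (sum_n v K + tv - L) < e / 4)%R) by exact H2.
  replace (sum_n (u n) K + tu - L) with (d + tu + - tv + (sum_n v K + tv - L)) by (unfold d; ring).
  pose proof (Cmod_triangle (d + tu + - tv) (sum_n v K + tv - L)).
  pose proof (Cmod_triangle (d + tu) (- tv)). pose proof (Cmod_triangle d tu).
  rewrite Cmod_opp in *. lra.
Qed.

Lemma ex_series_gauss (B r : R) : (0 < B)%R -> (0 < r < 1)%R ->
  ex_series (fun k => B ^ k * r ^ (k * k))%R.
Proof.
  intros hB hr. apply ex_series_Rabs, (ex_series_DAlembert _ 0); [lra| |].
  - intros k. apply Rgt_not_eq, Rmult_lt_0_compat; apply pow_lt; lra.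
  - apply (is_lim_seq_ext (fun k => B * r * (r ^ 2) ^ k)%R).
    { intros k. assert (0 < B ^ k * r ^ (k * k))%R by (apply Rmult_lt_0_compat; apply pow_lt; lra).
      replace (S k * S k)%nat with (k * k + 2 * k + 1)%nat by lia.
      rewrite Rabs_pos_eq.
      - rewrite (pow_add r (k * k + 2 * k) 1), (pow_add r (k * k) (2 * k)), (pow_mult r 2 k).
        rewrite <- (tech_pow_Rmult B k). field. split; apply pow_nonzero; lra.
      - apply Rdiv_le_0_compat; [|lra]. apply Rmult_le_pos; apply pow_le; lra. }
    replace (Finite 0) with (Rbar_mult (B * r)%R 0) by (simpl; f_equal; ring).
    apply is_lim_seq_scal_l, is_lim_seq_geom. rewrite Rabs_pos_eq; [|apply pow_le]; nra.
Qed.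

(** * Infinite q-Pochhammer symbols *)

Lemma qpoch_Cmod_bounds (x b : C) (r s : R) n :
  (Cmod x <= r < 1)%R -> (Cmod b <= s < 1)%R ->
  (exp (- (r / ((1 - r) * (1 - s)))) <= Cmod (qpoch x b n) <= exp (r / (1 - s)))%R.
Proof.
  intros hx hb. pose proof (Cmod_ge_0 x). pose proof (Cmod_ge_0 b).
  (* the exponents are partial sums of the geometric series [r s^i], of total [r / (1 - s)] *)
  assert (Hsharp : (exp (- (r * (1 - s ^ n) / ((1 - r) * (1 - s)))) <= Cmod (qpoch x b n)
                    <= exp (r * (1 - s ^ n) / (1 - s)))%R).
  { induction n as [|n IH]; simpl qpoch.
    - rewrite Cmod_1. simpl pow. replace (r * (1 - 1))%R with 0%R by ring.
      rewrite !Rdiv_0_l, Ropp_0, exp_0. lra.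
    - assert (hsn : (0 <= s ^ n <= 1)%R) by (split; [apply pow_le|apply pow_le_1]; lra).
      set (y := Cmod (x * b ^ n)).
      assert (hy : (0 <= y <= r * s ^ n)%R).
      { unfold y. rewrite Cmod_mult, Cmod_pow. split; [apply Rmult_le_pos; [lra|apply pow_le; lra]|].
        apply Rmult_le_compat; try lra; [apply pow_le; lra|apply pow_incr; lra]. }
      assert (hf : (1 - y <= Cmod (1 - x * b ^ n) <= 1 + y)%R).
      { unfold y. pose proof (Cmod_triangle (1 - x * b ^ n) (x * b ^ n)).
        pose proof (Cmod_triangle 1 (- (x * b ^ n))). rewrite Cmod_opp, Cmod_1 in *.
        replace (1 - x * b ^ n + x * b ^ n) with (RtoC 1) in H1 by ring. rewrite Cmod_1 in H1.
        change (1 + - (x * b ^ n)) with (1 - x * b ^ n) in H2. split; lra. }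
      assert (hlow : (exp (- (r * s ^ n / (1 - r))) <= 1 - y)%R).
      { apply Rle_trans with (exp (- (y / (1 - y)))); [apply exp_le_compat|apply exp_neg_le_one_sub; nra].
        apply Ropp_le_contravar. unfold Rdiv. apply Rmult_le_compat; try nra.
        - apply Rlt_le, Rinv_0_lt_compat. nra.
        - apply Rinv_le_contravar; nra. }
      assert (hup : (1 + y <= exp (r * s ^ n))%R) by (eapply Rle_trans; [|apply exp_ineq1_le]; lra).
      rewrite Cmod_mult. simpl pow.
      replace (r * (1 - s * s ^ n) / (1 - s))%R with (r * (1 - s ^ n) / (1 - s) + r * s ^ n)%R by (field; lra).
      replace (- (r * (1 - s * s ^ n) / ((1 - r) * (1 - s))))%R
        with (- (r * (1 - s ^ n) / ((1 - r) * (1 - s))) + - (r * s ^ n / (1 - r)))%R by (field; lra).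
      rewrite !exp_plus. pose proof (exp_pos (- (r * s ^ n / (1 - r)))).
      split; apply Rmult_le_compat; try lra; try apply Cmod_ge_0; apply Rlt_le, exp_pos. }
  assert (hsn : (0 <= s ^ n)%R) by (apply pow_le; lra).
  split; eapply Rle_trans; try apply Hsharp; apply exp_le_compat.
  - apply Ropp_le_contravar. unfold Rdiv. apply Rmult_le_compat_r; [|nra].
    apply Rlt_le, Rinv_0_lt_compat, Rmult_lt_0_compat; lra.
  - unfold Rdiv. apply Rmult_le_compat_r; [apply Rlt_le, Rinv_0_lt_compat; lra|nra].
Qed.

Lemma qpoch_neq0 (x b : C) n : (Cmod x < 1)%R -> (Cmod b < 1)%R -> qpoch x b n <> 0.
Proof.
  intros hx hb E.
  destruct (qpoch_Cmod_bounds x b (Cmod x) (Cmod b) n) as [hl _]; [lra|lra|].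
  rewrite E, Cmod_0 in hl. pose proof (exp_pos (- (Cmod x / ((1 - Cmod x) * (1 - Cmod b))))). lra.
Qed.

Lemma qpoch_lim (x b : C) : (Cmod x < 1)%R -> (Cmod b < 1)%R ->
  exists l, is_qpoch_inf x b l /\ l <> 0.
Proof.
  intros hx hb. set (r := Cmod x). set (s := Cmod b).
  pose proof (Cmod_ge_0 x). pose proof (Cmod_ge_0 b).
  set (E := exp (r / (1 - s))).
  set (d := fun i => match i with O => RtoC 1 | S j => - (qpoch x b j * (x * b ^ j)) end).
  assert (Hd : forall n, qpoch x b n = sum_n d n).
  { induction n as [|n IH]; [now rewrite sum_O|]. rewrite sum_Sn, <- IH. simpl. change plus with Cplus. ring. }
  assert (Hdb : forall i, (norm (d i) <= match i with O => 1 | S j => E * r * s ^ j end)%R).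
  { intros [|j]; simpl d; change norm with Cmod.
    - rewrite Cmod_1. lra.
    - rewrite Cmod_opp, Cmod_mult, Cmod_mult, Cmod_pow, Rmult_assoc.
      apply Rmult_le_compat;
        [apply Cmod_ge_0|apply Rmult_le_pos; [|apply pow_le]; apply Cmod_ge_0| |apply Rle_refl].
      apply (qpoch_Cmod_bounds x b r s j); unfold r, s; lra. }
  destruct (ex_series_le (V := C_CompleteNormedModule) d _ Hdb) as [l Hl].
  { apply ex_series_incr_1. apply (ex_series_scal_l (K := R_AbsRing) (E * r)%R (fun j => s ^ j)%R).
    apply ex_series_geom. rewrite Rabs_pos_eq; unfold s; lra. }
  assert (Hlim : is_qpoch_inf x b l) by exact (filterlim_ext _ _ (fun n => eq_sym (Hd n)) Hl).
  exists l. split; [exact Hlim|].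
  apply (lim_neq0 (qpoch x b) l (exp (- (r / ((1 - r) * (1 - s)))))); [exact Hlim|apply exp_pos|].
  intros n. apply (qpoch_Cmod_bounds x b r s n); unfold r, s; lra.
Qed.

Lemma lim_qpoch_1 (x : nat -> C) (b : C) k :
  filterlim x eventually (locally (RtoC 0)) ->
  filterlim (fun n => qpoch (x n) b k) eventually (locally (RtoC 1)).
Proof.
  intros hx. induction k as [|k IH]; [simpl; apply filterlim_const|].
  replace (RtoC 1) with (1 * (1 - 0 * b ^ k)) by ring.
  apply lim_Cmult; [exact IH|]. apply lim_Cminus; [apply filterlim_const|].
  apply (lim_Cmult _ (fun _ => b ^ k)); [exact hx|apply filterlim_const].
Qed.

Definition geo_bounded (u : nat -> nat -> C) : Prop :=
  exists c b : R, (0 <= c)%R /\ (0 <= b)%R /\ forall n k, (Cmod (u n k) <= c * b ^ k)%R.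

Lemma geo_bounded_const (u : nat -> nat -> C) (c : R) :
  (forall n k, Cmod (u n k) <= c)%R -> geo_bounded u.
Proof.
  intros hu. exists c, 1%R. split; [eapply Rle_trans; [apply Cmod_ge_0|apply (hu O O)]|].
  split; [lra|]. intros n k. rewrite pow1, Rmult_1_r. apply hu.
Qed.

Lemma geo_bounded_mult (u v : nat -> nat -> C) :
  geo_bounded u -> geo_bounded v -> geo_bounded (fun n k => u n k * v n k).
Proof.
  intros [c [b [hc [hb hu]]]] [c' [b' [hc' [hb' hv]]]]. exists (c * c')%R, (b * b')%R.
  split; [apply Rmult_le_pos; assumption|]. split; [apply Rmult_le_pos; assumption|].
  intros n k. rewrite Cmod_mult, Rpow_mult_distr.
  replace (c * c' * (b ^ k * b' ^ k))%R with (c * b ^ k * (c' * b' ^ k))%R by ring.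
  apply Rmult_le_compat; auto using Cmod_ge_0.
Qed.

(** * The terminating identity *)

Fixpoint qfall (q : C) (n k : nat) : C :=
  match k with O => 1 | S j => qfall q n j * (q ^ (2 * n) - q ^ (2 * j)) end.

(* [qfall q n (k - 1)], extended to [k = 0] so that [qfall_S_k] holds for every [k] *)
Definition qfall_prev (q : C) (n k : nat) : C :=
  match k with O => / (q ^ (2 * n) - / q ^ 2) | S j => qfall q n j end.

Definition lhs_coef (q : C) (k : nat) : C :=
  qint q (4 * k + 1) * (qpoch q (q ^ 2) k ^ 3 / qpoch (q ^ 2) (q ^ 2) k ^ 3) * q ^ k.

Definition trunc_den (q : C) (n k : nat) : C := qpoch (q ^ (2 * n + 3)) (q ^ 2) k.

Definition prod_ratio (q : C) (n : nat) : C :=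
  qpoch q (q ^ 2) n * qpoch (q ^ 3) (q ^ 2) n / qpoch (q ^ 2) (q ^ 2) n ^ 2.

Definition rhs_partial (q : C) (n : nat) : C := sum_n (rhs_term q) n.

Definition trunc_term (q : C) (n k : nat) : C :=
  lhs_coef q k * qfall q n k / trunc_den q n k * inner_sum q k.

Definition wz_F (q : C) (n k : nat) : C :=
  lhs_coef q k * qfall q n k / (trunc_den q n k * prod_ratio q n).

Definition wz_cert_form (q Q K A Y D P H G : C) : C :=
  - (A * Y * Q * (K - 1)) / (D * P * (1 - q * Q) * (1 - q * K ^ 2))
  * ((H - G) * (K - 1) ^ 2 - (1 - q) ^ 2 * K).

Definition wz_cert (q c : C) (n k : nat) : C :=
  wz_cert_form q (q ^ (2 * n)) (q ^ (2 * k)) (lhs_coef q k) (qfall_prev q n k)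
    (trunc_den q n k) (prod_ratio q n) (inner_sum q k + c) (rhs_partial q n).

(* With [Q = q^(2n)], [K = q^(2k)], [A = lhs_coef q k], [Y = qfall_prev q n k], [D = trunc_den q n k],
   [P = prod_ratio q n], [H = inner_sum q k + c] and [G = rhs_partial q n], the hypotheses express the
   primed quantities at [n + 1] or [k + 1], and the conclusion is the WZ equation [wz_step]. *)
Lemma wz_rational_identity (q Q K A A' Y D D' D'' P P' H H' G G' : C) :
  q <> 0 -> 1 - q <> 0 -> D <> 0 -> P <> 0 ->
  1 - q * Q <> 0 -> 1 - q ^ 2 * Q <> 0 -> 1 - q ^ 3 * Q <> 0 -> 1 - q ^ 3 * Q * K <> 0 ->
  1 - q * K <> 0 -> 1 - q ^ 2 * K <> 0 -> 1 - q * K ^ 2 <> 0 -> 1 - q ^ 5 * K ^ 2 <> 0 ->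
  A' = A * ((1 - q ^ 5 * K ^ 2) / (1 - q * K ^ 2) * ((1 - q * K) / (1 - q ^ 2 * K)) ^ 3 * q) ->
  D' = D * (1 - q ^ 3 * Q * K) / (1 - q ^ 3 * Q) ->
  D'' = D * (1 - q ^ 3 * Q * K) ->
  P' = P * ((1 - q * Q) * (1 - q ^ 3 * Q) / (1 - q ^ 2 * Q) ^ 2) ->
  H' = H - q * K / ((1 - q * K) / (1 - q)) ^ 2 + q ^ 2 * K / ((1 - q ^ 2 * K) / (1 - q)) ^ 2 ->
  G' = G + q ^ 2 * Q / ((1 - q ^ 2 * Q) / (1 - q)) ^ 2 ->
  A * (K / q ^ 2 * (q ^ 2 * Q - 1) * Y) / (D' * P') * (H - G')
    - A * (Y * (Q - K / q ^ 2)) / (D * P) * (H - G)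
  = wz_cert_form q Q (q ^ 2 * K) A' (Y * (Q - K / q ^ 2)) D'' P H' G
    - wz_cert_form q Q K A Y D P H G.
Proof.
  intros. subst. unfold wz_cert_form.
  assert (1 - q * (q ^ 4 * K ^ 2) <> 0)
    by (now replace (1 - q * (q ^ 4 * K ^ 2)) with (1 - q ^ 5 * K ^ 2) by ring).
  field. repeat split; assumption.
Qed.

Lemma qfall_eq0 (q : C) n k : (n < k)%nat -> qfall q n k = 0.
Proof.
  induction k as [|k IH]; intros hk; [lia|]. simpl.
  destruct (Nat.eq_dec n k) as [->|hne]; [ring|]. rewrite IH by lia. ring.
Qed.

Lemma lim_qfall (q : C) k : (Cmod q < 1)%R ->
  filterlim (fun n => q ^ k * qfall q n k) eventually (locally ((-1) ^ k * q ^ (k * k))).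
Proof.
  intros hq. induction k as [|k IH]; [simpl; apply filterlim_const|].
  apply (filterlim_ext (fun n => q ^ k * qfall q n k * (q * q ^ (2 * n) - q * q ^ (2 * k)))).
  { intros n. cbn [qfall]. rewrite Cpow_S. ring. }
  replace ((-1) ^ S k * q ^ (S k * S k)) with ((-1) ^ k * q ^ (k * k) * (0 - q * q ^ (2 * k))).
  - apply lim_Cmult; [exact IH|]. apply lim_Cminus; [apply lim_qpow_2n; exact hq|apply filterlim_const].
  - replace (S k * S k)%nat with (S (2 * k + k * k)) by lia. rewrite !Cpow_S, Cpow_add_r. ring.
Qed.

Section Truncation.

Variable q : C.
Hypothesis hq0 : (0 < Cmod q)%R.
Hypothesis hq1 : (Cmod q < 1)%R.

Lemma q_neq0 : q <> 0.
Proof. intros E. rewrite E, Cmod_0 in hq0. lra. Qed.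

Ltac solve_one_sub_qpow e :=
  match goal with |- Cminus _ ?X <> _ =>
    replace X with (q ^ e) by (rewrite ?Cpow_add_r, ?Cpow_mult_r; ring);
    apply one_sub_pow_neq0; [exact hq1|lia] end.

Lemma qpow_sub_1_neq0 m : (0 < m)%nat -> q ^ m - 1 <> 0.
Proof.
  intros hm E. apply (one_sub_pow_neq0 q m hq1 hm).
  replace (1 - q ^ m) with (- (q ^ m - 1)) by ring. rewrite E. ring.
Qed.

Lemma qfall_S_k n k : qfall q n k = qfall_prev q n k * (q ^ (2 * n) - q ^ (2 * k) / q ^ 2).
Proof.
  pose proof q_neq0. destruct k as [|k].
  - pose proof (qpow_sub_1_neq0 (2 * n + 2) ltac:(lia)). rewrite Cpow_add_r in *.
    change (@eq C 1 (/ (q ^ (2 * n) - / q ^ 2) * (q ^ (2 * n) - 1 / q ^ 2))). field. auto.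
  - change (qfall q n k * (q ^ (2 * n) - q ^ (2 * k)) = qfall q n k * (q ^ (2 * n) - q ^ (2 * S k) / q ^ 2)).
    rewrite pow2S. field. auto.
Qed.

Lemma qfall_S_n n k :
  qfall q (S n) k = q ^ (2 * k) / q ^ 2 * (q ^ 2 * q ^ (2 * n) - 1) * qfall_prev q n k.
Proof.
  pose proof q_neq0.
  assert (E : forall j, qfall q (S n) (S j) = q ^ (2 * j) * (q ^ 2 * q ^ (2 * n) - 1) * qfall q n j).
  { induction j as [|j IH].
    - change (@eq C (1 * (q ^ (2 * S n) - 1)) (1 * (q ^ 2 * q ^ (2 * n) - 1) * 1)). rewrite pow2S. ring.
    - change (qfall q (S n) (S j) * (q ^ (2 * S n) - q ^ (2 * S j))
              = q ^ (2 * S j) * (q ^ 2 * q ^ (2 * n) - 1) * (qfall q n j * (q ^ (2 * n) - q ^ (2 * j)))).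
      rewrite IH, !pow2S. ring. }
  destruct k as [|k].
  - pose proof (qpow_sub_1_neq0 (2 * n + 2) ltac:(lia)). rewrite Cpow_add_r in *.
    change (@eq C 1 (1 / q ^ 2 * (q ^ 2 * q ^ (2 * n) - 1) * / (q ^ (2 * n) - / q ^ 2))).
    field. auto.
  - rewrite E. change (qfall_prev q n (S k)) with (qfall q n k). rewrite pow2S. field. auto.
Qed.

Lemma lhs_coef_S k :
  lhs_coef q (S k) = lhs_coef q k * ((1 - q ^ 5 * (q ^ (2 * k)) ^ 2) / (1 - q * (q ^ (2 * k)) ^ 2)
    * ((1 - q * q ^ (2 * k)) / (1 - q ^ 2 * q ^ (2 * k))) ^ 3 * q).
Proof.
  unfold lhs_coef, qint. rewrite !qpoch_S, <- (Cpow_mult_r q 2 k).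
  assert (qpoch (q ^ 2) (q ^ 2) k <> 0) by (apply qpoch_neq0; apply Cmod_pow_lt_1; auto).
  replace (q ^ (4 * S k + 1)) with (q ^ 5 * (q ^ (2 * k)) ^ 2)
    by (rewrite <- Cpow_mult_r, <- Cpow_add_r; f_equal; lia).
  replace (q ^ (4 * k + 1)) with (q * (q ^ (2 * k)) ^ 2) by (rewrite <- Cpow_mult_r, <- Cpow_S; f_equal; lia).
  rewrite (Cpow_S q k). field. repeat split; auto.
  all: first [solve_one_sub_qpow 1%nat | solve_one_sub_qpow (2 + 2 * k)%nat
             | solve_one_sub_qpow (1 + 2 * k + 2 * k)%nat].
Qed.

Lemma trunc_den_neq0 n k : trunc_den q n k <> 0.
Proof. apply qpoch_neq0; apply Cmod_pow_lt_1; auto; lia. Qed.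

Lemma prod_ratio_neq0 n : prod_ratio q n <> 0.
Proof.
  unfold prod_ratio.
  pose proof (Cmod_pow_lt_1 q 2 hq1 ltac:(lia)). pose proof (Cmod_pow_lt_1 q 3 hq1 ltac:(lia)).
  apply Cdiv_neq0; [apply Cmult_neq_0|apply Cpow_nz]; apply qpoch_neq0; auto.
Qed.

Lemma trunc_den_S_k n k : trunc_den q n (S k) = trunc_den q n k * (1 - q ^ 3 * q ^ (2 * n) * q ^ (2 * k)).
Proof.
  unfold trunc_den. rewrite qpoch_S, <- Cpow_mult_r. f_equal. f_equal.
  rewrite <- !Cpow_add_r. f_equal. lia.
Qed.

Lemma trunc_den_S_n n k :
  trunc_den q (S n) k = trunc_den q n k * (1 - q ^ 3 * q ^ (2 * n) * q ^ (2 * k)) / (1 - q ^ 3 * q ^ (2 * n)).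
Proof.
  assert (E : forall x b j, qpoch x b (S j) = (1 - x) * qpoch (x * b) b j).
  { intros x b j. induction j as [|j IH]; [simpl; ring|]. rewrite qpoch_S, IH. simpl. ring. }
  rewrite <- trunc_den_S_k. unfold trunc_den. rewrite E.
  replace (q ^ (2 * n + 3) * q ^ 2) with (q ^ (2 * S n + 3)) by (rewrite <- Cpow_add_r; f_equal; lia).
  replace (q ^ (2 * n + 3)) with (q ^ 3 * q ^ (2 * n)) by (rewrite <- Cpow_add_r; f_equal; lia).
  field. solve_one_sub_qpow (3 + 2 * n)%nat.
Qed.

Lemma prod_ratio_S n :
  prod_ratio q (S n) = prod_ratio q n
    * ((1 - q * q ^ (2 * n)) * (1 - q ^ 3 * q ^ (2 * n)) / (1 - q ^ 2 * q ^ (2 * n)) ^ 2).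
Proof.
  unfold prod_ratio. rewrite !qpoch_S, <- (Cpow_mult_r q 2 n).
  assert (qpoch (q ^ 2) (q ^ 2) n <> 0) by (apply qpoch_neq0; apply Cmod_pow_lt_1; auto).
  field. split; [solve_one_sub_qpow (2 + 2 * n)%nat|auto].
Qed.

Lemma inner_sum_S k :
  inner_sum q (S k) = inner_sum q k - q * q ^ (2 * k) / ((1 - q * q ^ (2 * k)) / (1 - q)) ^ 2
    + q ^ 2 * q ^ (2 * k) / ((1 - q ^ 2 * q ^ (2 * k)) / (1 - q)) ^ 2.
Proof.
  unfold inner_sum. replace (2 * S k)%nat with (S (S (2 * k))) by lia.
  rewrite !sum_Sn. unfold qint.
  replace (S (S (2 * k))) with (2 + 2 * k)%nat by lia. replace (S (2 * k)) with (1 + 2 * k)%nat by lia.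
  rewrite !Cpow_add_r, (Cpow_mult_r (-1) 2 k).
  replace ((-1) ^ 2) with (RtoC 1) by ring. rewrite Cpow_1_l, Cpow_1_r.
  change plus with Cplus. field.
  repeat split;
    [solve_one_sub_qpow 1%nat|solve_one_sub_qpow (2 + 2 * k)%nat|solve_one_sub_qpow (1 + 2 * k)%nat].
Qed.

Lemma rhs_partial_S n :
  rhs_partial q (S n) = rhs_partial q n + q ^ 2 * q ^ (2 * n) / ((1 - q ^ 2 * q ^ (2 * n)) / (1 - q)) ^ 2.
Proof. unfold rhs_partial. rewrite sum_Sn. unfold rhs_term, qint. rewrite pow2S. reflexivity. Qed.

Lemma wz_step c n k :
  wz_F q (S n) k * (inner_sum q k + c - rhs_partial q (S n))
    - wz_F q n k * (inner_sum q k + c - rhs_partial q n)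
  = wz_cert q c n (S k) - wz_cert q c n k.
Proof.
  unfold wz_F, wz_cert. change (qfall_prev q n (S k)) with (qfall q n k).
  rewrite qfall_S_n, qfall_S_k, pow2S.
  pose proof q_neq0.
  eapply wz_rational_identity; auto using trunc_den_neq0, prod_ratio_neq0.
  - solve_one_sub_qpow 1%nat.
  - solve_one_sub_qpow (1 + 2 * n)%nat.
  - solve_one_sub_qpow (2 + 2 * n)%nat.
  - solve_one_sub_qpow (3 + 2 * n)%nat.
  - solve_one_sub_qpow (3 + 2 * n + 2 * k)%nat.
  - solve_one_sub_qpow (1 + 2 * k)%nat.
  - solve_one_sub_qpow (2 + 2 * k)%nat.
  - solve_one_sub_qpow (1 + 2 * k + 2 * k)%nat.
  - solve_one_sub_qpow (5 + 2 * k + 2 * k)%nat.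
  - apply lhs_coef_S.
  - apply trunc_den_S_n.
  - apply trunc_den_S_k.
  - apply prod_ratio_S.
  - rewrite inner_sum_S. ring.
  - apply rhs_partial_S.
Qed.

Lemma wz_cert_0 c n : wz_cert q c n 0 = 0.
Proof. unfold wz_cert, wz_cert_form. change (q ^ (2 * 0)) with (RtoC 1). unfold Cdiv. ring. Qed.

Lemma wz_cert_vanish c n : wz_cert q c n (S (S n)) = 0.
Proof.
  unfold wz_cert, wz_cert_form. change (qfall_prev q n (S (S n))) with (qfall q n (S n)).
  rewrite qfall_eq0 by lia. unfold Cdiv. ring.
Qed.

Lemma wz_sum c n : @eq C (sum_n (fun k => wz_F q n k * (inner_sum q k + c - rhs_partial q n)) n) c.
Proof.
  induction n as [|n IH].
  - rewrite sum_O. unfold wz_F, lhs_coef, trunc_den, prod_ratio, inner_sum, rhs_partial, qint.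
    rewrite !sum_O. simpl. field. solve_one_sub_qpow 1%nat.
  - set (T := fun n k => wz_F q n k * (inner_sum q k + c - rhs_partial q n)).
    change (@eq C (sum_n (T (S n)) (S n)) c). change (@eq C (sum_n (T n) n) c) in IH.
    rewrite (sum_n_telescope (T n) _ (wz_cert q c n)) by (intros k; unfold T; rewrite <- wz_step; ring).
    rewrite sum_Sn, IH, wz_cert_vanish, wz_cert_0.
    unfold T, wz_F. rewrite qfall_eq0 by lia. change plus with Cplus. unfold Cdiv. ring.
Qed.

Lemma trunc_sum_eq n : @eq C (sum_n (trunc_term q n) n) (prod_ratio q n * rhs_partial q n).
Proof.
  set (G := rhs_partial q n).
  set (wz := fun c k => wz_F q n k * (inner_sum q k + c - G)).
  rewrite (sum_n_ext _ (fun k => prod_ratio q n * G * wz 1 k + prod_ratio q n * (1 - G) * wz 0 k)).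
  - rewrite sum_n_lin. unfold wz, G. rewrite !wz_sum. ring.
  - intros k.
    change (@eq C (trunc_term q n k) (prod_ratio q n * G * wz 1 k + prod_ratio q n * (1 - G) * wz 0 k)).
    unfold wz, trunc_term, wz_F. field. split; [apply prod_ratio_neq0|apply trunc_den_neq0].
Qed.

Lemma Cmod_qpow_le m : (0 < m)%nat -> (Cmod (q ^ m) <= Cmod q)%R.
Proof.
  intros hm. destruct m as [|m]; [lia|]. rewrite Cpow_S, Cmod_mult, Cmod_pow.
  pose proof (pow_le_1 (Cmod q) m ltac:(pose proof (Cmod_ge_0 q); lra)). nra.
Qed.

Lemma Cmod_qint_le m : (Cmod (qint q m) <= 2 / (1 - Cmod q))%R.
Proof.
  unfold qint. assert (1 - q <> 0) by (apply one_sub_neq0, hq1). rewrite Cmod_div by auto.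
  pose proof (Cmod_triangle (1 - q) q). replace (1 - q + q) with (RtoC 1) in H0 by ring. rewrite Cmod_1 in H0.
  pose proof (Cmod_triangle 1 (- q ^ m)). rewrite Cmod_1, Cmod_opp, Cmod_pow in H1.
  pose proof (pow_le_1 (Cmod q) m ltac:(pose proof (Cmod_ge_0 q); lra)).
  change (1 + - q ^ m) with (1 - q ^ m) in H1.
  unfold Rdiv. apply Rmult_le_compat; [apply Cmod_ge_0|apply Rlt_le, Rinv_0_lt_compat; lra|lra|].
  apply Rinv_le_contravar; lra.
Qed.

Lemma Cmod_qint_ge m : (0 < m)%nat -> ((1 - Cmod q) / 2 <= Cmod (qint q m))%R.
Proof.
  intros hm. unfold qint. assert (1 - q <> 0) by (apply one_sub_neq0, hq1). rewrite Cmod_div by auto.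
  pose proof (Cmod_triangle 1 (- q)). rewrite Cmod_1, Cmod_opp in H0. change (1 + - q) with (1 - q) in H0.
  pose proof (Cmod_triangle (1 - q ^ m) (q ^ m)). replace (1 - q ^ m + q ^ m) with (RtoC 1) in H1 by ring.
  rewrite Cmod_1 in H1. pose proof (Cmod_qpow_le m hm).
  assert (0 < Cmod (1 - q))%R.
  { destruct (Cmod_ge_0 (1 - q)) as [h|h]; [exact h|]. now apply eq_sym, Cmod_eq_0 in h. }
  unfold Rdiv. apply Rmult_le_compat; [lra|lra|lra|]. apply Rinv_le_contravar; lra.
Qed.

Lemma Cmod_inner_sum_le k : (Cmod (inner_sum q k) <= 4 / (1 - Cmod q) ^ 2 * 3 ^ k)%R.
Proof.
  pose proof (Cmod_ge_0 q).
  assert (hterm : forall i, (Cmod (match i with O => RtoC 0 | S _ => (-1) ^ i * q ^ i / qint q i ^ 2 end)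
                             <= 4 / (1 - Cmod q) ^ 2)%R).
  { assert (0 <= 4 / (1 - Cmod q) ^ 2)%R by (apply Rdiv_le_0_compat; [lra|apply pow_lt; lra]).
    intros [|j]; [rewrite Cmod_0; exact H0|].
    pose proof (Cmod_qint_ge (S j) ltac:(lia)) as hl.
    assert (qint q (S j) <> 0) by (intros E; rewrite E, Cmod_0 in hl; lra).
    rewrite Cmod_div, Cmod_mult, !Cmod_pow by (apply Cpow_nz; auto).
    replace (Cmod (-1)) with 1%R by (rewrite <- Cmod_m1; f_equal; ring). rewrite pow1, Rmult_1_l.
    pose proof (pow_le_1 (Cmod q) (S j) ltac:(lra)).
    replace (4 / (1 - Cmod q) ^ 2)%R with (1 * / ((1 - Cmod q) / 2) ^ 2)%R by (field; lra).
    unfold Rdiv. apply Rmult_le_compat; [apply pow_le; lra|apply Rlt_le, Rinv_0_lt_compat, pow_lt; lra|lra|].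
    apply Rinv_le_contravar; [apply pow_lt; lra|apply pow_incr; lra]. }
  unfold inner_sum. eapply Rle_trans; [apply (Cmod_sum_n_le _ _ _ hterm)|].
  rewrite Rmult_comm. apply Rmult_le_compat_l; [apply Rdiv_le_0_compat; [lra|apply pow_lt; lra]|].
  clear. induction k as [|k IH]; [simpl; lra|].
  replace (S (2 * S k)) with (S (S (S (2 * k)))) by lia. rewrite !S_INR in *. simpl pow.
  pose proof (pos_INR (2 * k)). lra.
Qed.

Lemma Cmod_qfall_le n k : (Cmod (q ^ k * qfall q n k) <= 2 ^ k * Cmod q ^ (k * k))%R.
Proof.
  pose proof (Cmod_ge_0 q). set (r := Cmod q) in *.
  induction k as [|k IH]; [simpl; rewrite Cmod_mult, Cmod_1; lra|].
  destruct (Nat.lt_ge_cases n (S k)) as [hk|hk].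
  { rewrite qfall_eq0, Cmult_0_r, Cmod_0 by lia. apply Rmult_le_pos; apply pow_le; lra. }
  assert (hstep : (Cmod (q ^ (2 * n) - q ^ (2 * k)) <= 2 * r ^ (2 * k))%R).
  { assert (r ^ (2 * n) <= r ^ (2 * k))%R.
    { replace (2 * n)%nat with (2 * k + 2 * (n - k))%nat by lia. rewrite pow_add.
      pose proof (pow_le_1 r (2 * (n - k)) ltac:(lra)). pose proof (pow_le r (2 * k) H). nra. }
    pose proof (Cmod_triangle (q ^ (2 * n)) (- q ^ (2 * k))). rewrite Cmod_opp, !Cmod_pow in H1.
    change (q ^ (2 * n) + - q ^ (2 * k)) with (q ^ (2 * n) - q ^ (2 * k)) in H1. fold r in H1. lra. }
  replace (q ^ S k * qfall q n (S k)) with (q ^ k * qfall q n k * (q * (q ^ (2 * n) - q ^ (2 * k))))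
    by (cbn [qfall]; rewrite Cpow_S; ring).
  rewrite (Cmod_mult (q ^ k * qfall q n k)), (Cmod_mult q). fold r.
  replace (2 ^ S k * r ^ (S k * S k))%R with (2 ^ k * r ^ (k * k) * (r * (2 * r ^ (2 * k))))%R
    by (replace (S k * S k)%nat with (S (2 * k + k * k)) by lia; rewrite <- !tech_pow_Rmult, pow_add; ring).
  apply Rmult_le_compat; [apply Cmod_ge_0|apply Rmult_le_pos; apply Cmod_ge_0|exact IH|].
  apply Rmult_le_compat_l; [exact H|exact hstep].
Qed.

Lemma Cmod_qpoch_le (x b : C) k :
  (Cmod x <= Cmod q)%R -> (Cmod b <= Cmod q)%R -> (Cmod (qpoch x b k) <= exp (Cmod q / (1 - Cmod q)))%R.
Proof. intros hx hb. apply (qpoch_Cmod_bounds x b (Cmod q) (Cmod q) k); lra. Qed.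

Lemma Cmod_inv_qpoch_le (x b : C) k :
  (Cmod x <= Cmod q)%R -> (Cmod b <= Cmod q)%R ->
  (Cmod (/ qpoch x b k) <= / exp (- (Cmod q / ((1 - Cmod q) * (1 - Cmod q)))))%R.
Proof.
  intros hx hb. destruct (qpoch_Cmod_bounds x b (Cmod q) (Cmod q) k) as [hl _]; [lra|lra|].
  rewrite Cmod_inv by (apply qpoch_neq0; lra). apply Rinv_le_contravar; [apply exp_pos|exact hl].
Qed.

Lemma trunc_term_bound :
  exists c B : R, (0 < B)%R /\ forall n k, (Cmod (trunc_term q n k) <= c * B ^ k * Cmod q ^ (k * k))%R.
Proof.
  set (G := fun n k => qint q (4 * k + 1) * qpoch q (q ^ 2) k * qpoch q (q ^ 2) k * qpoch q (q ^ 2) k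
                       * / qpoch (q ^ 2) (q ^ 2) k * / qpoch (q ^ 2) (q ^ 2) k * / qpoch (q ^ 2) (q ^ 2) k
                       * / trunc_den q n k * inner_sum q k).
  assert (hq2 : (Cmod (q ^ 2) <= Cmod q)%R) by (apply Cmod_qpow_le; lia).
  assert (hG : geo_bounded G).
  { assert (hP1 : geo_bounded (fun _ k => qpoch q (q ^ 2) k))
      by (apply (geo_bounded_const _ (exp (Cmod q / (1 - Cmod q)))); intros; apply Cmod_qpoch_le; lra).
    assert (hP2 : geo_bounded (fun _ k => / qpoch (q ^ 2) (q ^ 2) k))
      by (eapply geo_bounded_const; intros; apply Cmod_inv_qpoch_le; lra).
    unfold G. apply geo_bounded_mult.
    2:{ exists (4 / (1 - Cmod q) ^ 2)%R, 3%R. split; [apply Rdiv_le_0_compat; [lra|apply pow_lt; lra]|].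
        split; [lra|]. intros. apply Cmod_inner_sum_le. }
    apply geo_bounded_mult.
    2:{ eapply geo_bounded_const. intros n k. apply Cmod_inv_qpoch_le; [apply Cmod_qpow_le; lia|exact hq2]. }
    do 3 (apply geo_bounded_mult; [|exact hP2]). do 3 (apply geo_bounded_mult; [|exact hP1]).
    apply (geo_bounded_const _ (2 / (1 - Cmod q))). intros. apply Cmod_qint_le. }
  destruct hG as [c [b [hc [hb hG]]]]. exists c, (2 * b + 1)%R. split; [lra|]. intros n k.
  replace (trunc_term q n k) with (G n k * (q ^ k * qfall q n k)).
  2:{ unfold G, trunc_term, lhs_coef, trunc_den. field.
      split; apply qpoch_neq0; try apply Cmod_pow_lt_1; auto; lia. }
  rewrite Cmod_mult. eapply Rle_trans.
  { apply Rmult_le_compat; [apply Cmod_ge_0|apply Cmod_ge_0|apply hG|apply Cmod_qfall_le]. }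
  replace (c * b ^ k * (2 ^ k * Cmod q ^ (k * k)))%R with (c * (2 * b) ^ k * Cmod q ^ (k * k))%R
    by (rewrite Rpow_mult_distr; ring).
  apply Rmult_le_compat_r; [apply pow_le, Cmod_ge_0|]. apply Rmult_le_compat_l; [exact hc|].
  apply pow_incr. lra.
Qed.

Lemma lim_trunc_term k : filterlim (fun n => trunc_term q n k) eventually (locally (lhs_term q k)).
Proof.
  set (a := qint q (4 * k + 1) * (qpoch q (q ^ 2) k ^ 3 / qpoch (q ^ 2) (q ^ 2) k ^ 3) * inner_sum q k).
  apply (filterlim_ext (fun n => a * (q ^ k * qfall q n k) * / trunc_den q n k)).
  { intros n. unfold a, trunc_term, lhs_coef, Cdiv. ring. }
  replace (lhs_term q k) with (a * ((-1) ^ k * q ^ (k * k)) * / 1).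
  - apply lim_Cmult; [apply lim_Cmult; [apply filterlim_const|apply lim_qfall, hq1]|].
    apply lim_Cinv; [|intros E; injection E; lra].
    apply lim_qpoch_1. apply (filterlim_ext (fun n => q ^ 3 * q ^ (2 * n))); [|apply lim_qpow_2n, hq1].
    intros n. rewrite <- Cpow_add_r. f_equal. lia.
  - unfold a. destruct k as [|k].
    + unfold inner_sum. rewrite sum_O. simpl. field.
    + unfold lhs_term. field. apply qpoch_neq0; apply Cmod_pow_lt_1; auto.
Qed.

End Truncation.

Lemma lim_prod_ratio (q P1 P3 P2 : C) :
  is_qpoch_inf q (q ^ 2) P1 -> is_qpoch_inf (q ^ 3) (q ^ 2) P3 -> is_qpoch_inf (q ^ 2) (q ^ 2) P2 -> P2 <> 0 ->
  filterlim (prod_ratio q) eventually (locally (P1 * P3 / P2 ^ 2)).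
Proof.
  intros H1 H3 H2 hP2. unfold prod_ratio, Cdiv. apply lim_Cmult; [apply lim_Cmult; assumption|].
  apply lim_Cinv; [|now apply Cpow_nz].
  apply (filterlim_ext (fun n => qpoch (q ^ 2) (q ^ 2) n * (qpoch (q ^ 2) (q ^ 2) n * 1))); [reflexivity|].
  apply lim_Cmult; [exact H2|]. apply lim_Cmult; [exact H2|apply filterlim_const].
Qed.

Theorem theorem1p4 (q : C) (hq0 : (0 < Cmod q)%R) (hq1 : (Cmod q < 1)%R) :
  exists (L P1 P3 P2 T : C),
    is_series (lhs_term q) L /\
    is_qpoch_inf q (q ^ 2) P1 /\
    is_qpoch_inf (q ^ 3) (q ^ 2) P3 /\
    is_qpoch_inf (q ^ 2) (q ^ 2) P2 /\
    is_series (rhs_term q) T /\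
    L = P1 * P3 / (P2 ^ 2) * T.
Proof.
  pose proof (Cmod_pow_lt_1 q 2 hq1 ltac:(lia)) as hq2. pose proof (Cmod_pow_lt_1 q 3 hq1 ltac:(lia)) as hq3.
  destruct (qpoch_lim q (q ^ 2) hq1 hq2) as [P1 [HP1 hP1]].
  destruct (qpoch_lim (q ^ 3) (q ^ 2) hq3 hq2) as [P3 [HP3 hP3]].
  destruct (qpoch_lim (q ^ 2) (q ^ 2) hq2 hq2) as [P2 [HP2 hP2]].
  set (P := P1 * P3 / P2 ^ 2).
  assert (hP : P <> 0) by (apply Cdiv_neq0; [apply Cmult_neq_0|apply Cpow_nz]; assumption).
  destruct (trunc_term_bound q hq0 hq1) as [c [B [hB hbound]]].
  destruct (tannery (trunc_term q) (lhs_term q) (fun k => c * B ^ k * Cmod q ^ (k * k))%R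
              (lim_trunc_term q hq1) hbound) as [L [HL Htrunc]].
  { apply (ex_series_ext (fun k => B ^ k * Cmod q ^ (k * k) * c))%R.
    { intros k. change (B ^ k * Cmod q ^ (k * k) * c = c * B ^ k * Cmod q ^ (k * k))%R. ring. }
    apply ex_series_scal_r, ex_series_gauss; [exact hB|split; assumption]. }
  exists L, P1, P3, P2, (L / P). repeat split; try assumption.
  - apply (filterlim_ext (fun n => sum_n (trunc_term q n) n * / prod_ratio q n)).
    { intros n. change (@eq C (sum_n (trunc_term q n) n * / prod_ratio q n) (rhs_partial q n)).
      rewrite trunc_sum_eq by assumption. field. apply prod_ratio_neq0; assumption. }
    apply lim_Cmult; [exact Htrunc|]. apply lim_Cinv; [|exact hP].
    apply lim_prod_ratio; assumption.
  - fold P. field. exact hP.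
Qed.
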